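(* Let $A$ be a primitive axial algebra of Jordan type $\eta$, and let $\mathcal A$ be a set of $\eta$-axes generating $A$ such that the graph $\Delta_{\mathcal A}$ is connected. Suppose there are distinct $a,b\in\mathcal A$ with $\tau(a)=\tau(b)\ne\mathrm{id}$. Then $\eta=\tfrac12$, $a+b$ is the identity element of $A$, and $A$ is a Jordan algebra of Clifford type, i.e. $A\cong J(V,B)$ for some $\mathbb F$-vector space $V$ with symmetric bilinear form $B$.
   Context: Throughout, $\mathbb F$ is a field of characteristic $\neq 2$ and $\eta\in\mathbb F\setminus\{0,1\}$. Let $A$ be a commutative, not necessarily associative $\mathbb F$-algebra. For $a\in A$ and $\lambda\in\mathbb F$ put $A_\lambda(a)=\{x\in A: xa=\lambda x\}$. An $\eta$-axis of $A$ is an element $a$ with $a^2=a$ such that $A=A_1(a)\oplus A_0(a)\oplus A_\eta(a)$, $A_1(a)=\mathbb F a$, and, writing $A_+(a)=A_1(a)\oplus A_0(a)$ and $A_-(a)=A_\eta(a)$, one has $A_+(a)A_+(a)\subseteq A_+(a)$, $A_+(a)A_-(a)\subseteq A_-(a)$, $A_-(a)A_-(a)\subseteq A_+(a)$ and $A_0(a)A_0(a)\subseteq A_0(a)$. $A$ is a primitive axial algebra of Jordan type $\eta$ if it is generated as an algebra by $\eta$-axes. For an $\eta$-axis $a$, the Miyamoto involution $\tau(a)$ is the automorphism of $A$ acting as the identity on $A_+(a)$ and as $-1$ on $A_-(a)$. For a set $\mathcal B$ of $\eta$-axes, $\Delta_{\mathcal B}$ is the graph with vertex set $\mathcal B$ in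 which distinct $x,y$ are adjacent iff $xy\neq 0$. For a symmetric bilinear form $B$ on an $\mathbb F$-vector space $V$, $J(V,B)$ is the algebra $\mathbb F\mathbf e\oplus V$ with product $(\alpha\mathbf e+u)(\beta\mathbf e+v)=(\alpha\beta+B(u,v))\mathbf e+\alpha v+\beta u$. *)

From HB Require Import structures.
From mathcomp Require Import all_boot all_order all_algebra.
Set Implicit Arguments. Unset Strict Implicit. Unset Printing Implicit Defensive.
Import Order.TTheory GRing.Theory Num.Theory.
Local Open Scope ring_scope.

Section Axial.
Variables (F : fieldType) (A : lmodType F) (mul : A -> A -> A).

Definition comm_algebra : Prop :=
  (forall (k : F) (x y z : A), mul (k *: x + y) z = k *: mul x z + mul y z) /\
  (forall x y : A, mul x y = mul y x).

Definition eigsp (a : A) (l : F) (x : A) : Prop := mul x a = l *: x.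

Definition Aplus (a : A) (x : A) : Prop :=
  exists u v, eigsp a 1 u /\ eigsp a 0 v /\ x = u + v.

Definition Aminus (eta : F) (a : A) (x : A) : Prop := eigsp a eta x.

Definition is_axis (eta : F) (a : A) : Prop :=
  mul a a = a /\
  (forall x, exists x1 x0 xe, eigsp a 1 x1 /\ eigsp a 0 x0 /\ eigsp a eta xe /\
        x = x1 + x0 + xe) /\
  (forall x1 x0 xe, eigsp a 1 x1 -> eigsp a 0 x0 -> eigsp a eta xe ->
        x1 + x0 + xe = 0 -> x1 = 0 /\ x0 = 0 /\ xe = 0) /\
  (forall x, eigsp a 1 x <-> exists k : F, x = k *: a) /\
  (forall x y, Aplus a x -> Aplus a y -> Aplus a (mul x y)) /\
  (forall x y, Aplus a x -> Aminus eta a y -> Aminus eta a (mul x y)) /\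
  (forall x y, Aminus eta a x -> Aminus eta a y -> Aplus a (mul x y)) /\
  (forall x y, eigsp a 0 x -> eigsp a 0 y -> eigsp a 0 (mul x y)).

(* f is the Miyamoto involution tau(a): the linear map acting as id on A_+(a)
   and as -1 on A_-(a) (it is uniquely determined by these properties). *)
Definition is_tau (eta : F) (a : A) (f : A -> A) : Prop :=
  (forall (k : F) x y, f (k *: x + y) = k *: f x + f y) /\
  (forall x, Aplus a x -> f x = x) /\
  (forall x, Aminus eta a x -> f x = - x).

Definition subalg (P : A -> Prop) : Prop :=
  P 0 /\ (forall (k : F) x y, P x -> P y -> P (k *: x + y)) /\
  (forall x y, P x -> P y -> P (mul x y)).

Definition generates (S : A -> Prop) : Prop :=
  forall P : A -> Prop, subalg P -> (forall x, S x -> P x) -> forall x, P x.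

Definition adj (x y : A) : Prop := x <> y /\ mul x y <> 0.

Inductive graph_path (S : A -> Prop) : A -> A -> Prop :=
| gp_refl x : S x -> graph_path S x x
| gp_step x y z : S x -> adj x y -> graph_path S y z -> graph_path S x z.

Definition graph_connected (S : A -> Prop) : Prop :=
  forall x y, S x -> S y -> graph_path S x y.

End Axial.

(* The Jordan algebra of Clifford type J(V,B) = F e (+) V, modelled on F * V *)
Definition jmul (F : fieldType) (V : lmodType F) (B : V -> V -> F)
  (p q : F * V) : F * V :=
  (p.1 * q.1 + B p.2 q.2, p.1 *: q.2 + q.1 *: p.2).

Definition symbilin (F : fieldType) (V : lmodType F) (B : V -> V -> F) : Prop :=
  (forall (k : F) u v w, B (k *: u + v) w = k * B u w + B v w) /\
  (forall u v, B u v = B v u).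

Definition iso_J (F : fieldType) (A : lmodType F) (mul : A -> A -> A)
  (V : lmodType F) (B : V -> V -> F) (phi : A -> F * V) : Prop :=
  bijective phi /\
  (forall (k : F) x y,
      phi (k *: x + y) = (k * (phi x).1 + (phi y).1, k *: (phi x).2 + (phi y).2)) /\
  (forall x y, phi (mul x y) = jmul B (phi x) (phi y)).

From HB Require Import structures.
From mathcomp Require Import all_boot all_order all_algebra.
From mathcomp Require Import ring.
From Stdlib Require Import ClassicalEpsilon.
Import GRing.Theory.
Local Open Scope ring_scope.
Set Implicit Arguments. Unset Strict Implicit. Unset Printing Implicit Defensive.

(* Since tau(a) = tau(b) fixes exactly A_+ and negates exactly A_-, the axes a and b
   have the same spaces A_+ and A_-, so ab = 0 and A = F a + F b + Z + N with
   Z = A_0(a) /\ A_0(b) and N = A_eta(a) = A_eta(b).  For axes x, y the x-coordinate of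
   y equals the y-coordinate of x; for a neighbour c of a in Delta this forces the a- and
   b-coordinates of c to be eta/2 unless eta = 1/2, and then a = b.  With eta = 1/2, every
   axis of the generating set lies in F a + F b + N or in Z; by Seress's lemma axes of
   the two kinds are orthogonal, so connectivity puts all of them in F a + F b + N.
   There the products of N-parts lie in F (a + b), so the linear span of the axes is a
   subalgebra, hence A itself, on which a + b acts as the identity.  Finally
   A = F (a + b) + V with V the kernel of the sum of the a- and b-coordinates, and the
   a-coordinate of uv gives the bilinear form on V. *)

(** * Linear algebra *)

(* The trivial extension F (+) A, with A^2 = 0, is a commutative ring into
   which A embeds; this lets [ring] decide identities between F-linear
   combinations of vectors of A. *)
Section TrivialExtension.
Variables (F : fieldType) (A : lmodType F).

Definition trivext : Type := (F * A)%type.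
HB.instance Definition _ := GRing.Zmodule.on trivext.

Definition tx_one : trivext := (1, 0).
Definition tx_mul (p q : trivext) : trivext := (p.1 * q.1, p.1 *: q.2 + q.1 *: p.2).

Fact tx_mulA : associative tx_mul.
Proof.
move=> [k u] [l v] [m w]; rewrite /tx_mul /=; congr pair; first by rewrite mulrA.
by rewrite !scalerDr !scalerA [m * k]mulrC [m * l]mulrC addrA.
Qed.

Fact tx_mulC : commutative tx_mul.
Proof. by move=> [k u] [l v]; rewrite /tx_mul /= mulrC addrC. Qed.

Fact tx_mul1 : left_id tx_one tx_mul.
Proof. by move=> [k u]; rewrite /tx_mul /= mul1r scale1r scaler0 addr0. Qed.

Fact tx_mulDl : left_distributive tx_mul +%R.
Proof.
move=> [k u] [l v] [m w]; rewrite /tx_mul /=; congr pair; first by rewrite mulrDl.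
by rewrite scalerDl scalerDr addrACA.
Qed.

Fact tx_one_neq0 : tx_one != 0.
Proof. by apply/eqP => -[] /eqP; rewrite oner_eq0. Qed.

HB.instance Definition _ :=
  GRing.Zmodule_isComNzRing.Build trivext tx_mulA tx_mulC tx_mul1 tx_mulDl tx_one_neq0.

Definition tx_vec (v : A) : trivext := (0, v).
Definition tx_scal (k : F) : trivext := (k, 0).

Lemma tx_vec_inj : injective tx_vec. Proof. by move=> u v []. Qed.
Lemma tx_vec0 : tx_vec 0 = 0. Proof. by []. Qed.
Lemma tx_vecD u v : tx_vec (u + v) = tx_vec u + tx_vec v.
Proof. by rewrite /tx_vec; congr pair; rewrite addr0. Qed.
Lemma tx_vecN u : tx_vec (- u) = - tx_vec u.
Proof. by rewrite /tx_vec; congr pair; rewrite oppr0. Qed.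
Lemma tx_vecB u v : tx_vec (u - v) = tx_vec u - tx_vec v.
Proof. by rewrite tx_vecD tx_vecN. Qed.
Lemma tx_vecZ k u : tx_vec (k *: u) = tx_scal k * tx_vec u.
Proof. by rewrite [RHS]/GRing.mul /= /tx_mul /= mulr0 scaler0 addr0. Qed.

Lemma tx_scal0 : tx_scal 0 = 0. Proof. by []. Qed.
Lemma tx_scal1 : tx_scal 1 = 1. Proof. by []. Qed.
Lemma tx_scalD k l : tx_scal (k + l) = tx_scal k + tx_scal l.
Proof. by rewrite /tx_scal; congr pair; rewrite addr0. Qed.
Lemma tx_scalN k : tx_scal (- k) = - tx_scal k.
Proof. by rewrite /tx_scal; congr pair; rewrite oppr0. Qed.
Lemma tx_scalB k l : tx_scal (k - l) = tx_scal k - tx_scal l.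
Proof. by rewrite tx_scalD tx_scalN. Qed.
Lemma tx_scalM k l : tx_scal (k * l) = tx_scal k * tx_scal l.
Proof. by rewrite [RHS]/GRing.mul /= /tx_mul /= !scaler0 addr0. Qed.
Lemma tx_scal_nat n : tx_scal n%:R = n%:R.
Proof. by elim: n => [|n IH] //; rewrite !mulrS tx_scalD IH. Qed.

End TrivialExtension.

Ltac lmod_ring :=
  apply: tx_vec_inj;
  rewrite ?(tx_vecD, tx_vecB, tx_vecN, tx_vecZ, tx_vec0,
            tx_scalM, tx_scalD, tx_scalB, tx_scalN, tx_scal1, tx_scal0, tx_scal_nat);
  ring.

Record linear_form (F : fieldType) (A : lmodType F) := LinearForm {
  lform :> A -> F;
  lform_linear : forall k x y, lform (k *: x + y) = k * lform x + lform y }.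

Section LinearFormKernel.
Variables (F : fieldType) (A : lmodType F) (l : linear_form A).

Lemma lformD x y : l (x + y) = l x + l y.
Proof. by have := lform_linear l 1 x y; rewrite !scale1r mul1r. Qed.

Lemma lform0 : l 0 = 0.
Proof. by apply: (addrI (l 0)); rewrite -lformD !addr0. Qed.

Lemma lformZ k x : l (k *: x) = k * l x.
Proof. by rewrite -[k *: x]addr0 lform_linear lform0 addr0. Qed.

Definition kernel_pred : {pred A} := fun x => l x == 0.

Fact kernel_submod_closed : GRing.submod_closed kernel_pred.
Proof.
split; first by rewrite unfold_in /= lform0.
by move=> k u v; rewrite !unfold_in /= lform_linear => /eqP -> /eqP ->; rewrite mulr0 addr0.
Qed.

HB.instance Definition _ :=
  GRing.isSubmodClosed.Build F A kernel_pred kernel_submod_closed.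
Record kernel := Kernel { kernel_val : A; kernel_valP : kernel_val \in kernel_pred }.
HB.instance Definition _ := [isSub for kernel_val].
HB.instance Definition _ := [Choice of kernel by <:].
HB.instance Definition _ := [SubChoice_isSubLmodule of kernel by <:].

Lemma kernel_valD (u v : kernel) : kernel_val (u + v) = kernel_val u + kernel_val v.
Proof. by []. Qed.
Lemma kernel_valZ k (u : kernel) : kernel_val (k *: u) = k *: kernel_val u.
Proof. by []. Qed.
Lemma kernel_val_inj : injective kernel_val. Proof. exact: val_inj. Qed.
Lemma kernel_val_eq0 (u : kernel) : l (kernel_val u) = 0.
Proof. by apply/eqP; have := kernel_valP u; rewrite unfold_in. Qed.

End LinearFormKernel.

Arguments lformZ {F A} l k x.
Arguments kernel_val_eq0 {F A} l u.

Section LinearSpan.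
Variables (F : fieldType) (A : lmodType F) (P : A -> Prop).

Inductive lspan : A -> Prop :=
| lspan_mem x : P x -> lspan x
| lspan0 : lspan 0
| lspan_lin k x y : lspan x -> lspan y -> lspan (k *: x + y).

Lemma lspanZ k x : lspan x -> lspan (k *: x).
Proof. by move=> Px; rewrite -[k *: x]addr0; apply: lspan_lin => //; exact: lspan0. Qed.

Lemma lspanD x y : lspan x -> lspan y -> lspan (x + y).
Proof. by move=> Px Py; rewrite -[x]scale1r; apply: lspan_lin. Qed.

End LinearSpan.

Lemma scaler_injl (F : fieldType) (A : lmodType F) (x : A) (k l : F) :
  x != 0 -> k *: x = l *: x -> k = l.
Proof.
move=> x0 /eqP; rewrite -subr_eq0 -scalerBl scaler_eq0 (negbTE x0) orbF subr_eq0.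
by move/eqP.
Qed.

(** * Axes of Jordan type *)

Section Axial.
Variables (F : fieldType) (A : lmodType F) (mul : A -> A -> A) (eta : F).
Hypothesis mul_comm_algebra : comm_algebra mul.

Lemma amulC x y : mul x y = mul y x. Proof. exact: mul_comm_algebra.2. Qed.

Lemma amul0l x : mul 0 x = 0.
Proof.
have := mul_comm_algebra.1 1 0 0 x; rewrite scale1r addr0 scale1r.
by move/(congr1 (fun v => v - mul 0 x)); rewrite subrr addrK.
Qed.

Lemma amulDl x y z : mul (x + y) z = mul x z + mul y z.
Proof. by have := mul_comm_algebra.1 1 x y z; rewrite !scale1r. Qed.
Lemma amulZl k x z : mul (k *: x) z = k *: mul x z.
Proof. by have := mul_comm_algebra.1 k x 0 z; rewrite !addr0 amul0l addr0. Qed.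
Lemma amulNl x z : mul (- x) z = - mul x z.
Proof. by rewrite -scaleN1r amulZl scaleN1r. Qed.
Lemma amulBl x y z : mul (x - y) z = mul x z - mul y z.
Proof. by rewrite amulDl amulNl. Qed.
Lemma amul0r x : mul x 0 = 0. Proof. by rewrite amulC amul0l. Qed.
Lemma amulDr x y z : mul z (x + y) = mul z x + mul z y.
Proof. by rewrite amulC amulDl !(amulC z). Qed.
Lemma amulZr k x z : mul z (k *: x) = k *: mul z x.
Proof. by rewrite amulC amulZl amulC. Qed.
Lemma amulNr x z : mul z (- x) = - mul z x.
Proof. by rewrite amulC amulNl amulC. Qed.
Lemma amulBr x y z : mul z (x - y) = mul z x - mul z y.
Proof. by rewrite amulDr amulNr. Qed.

Ltac amul_expand :=
  rewrite ?(amulDl, amulDr, amulZl, amulZr, amulNl, amulNr, amulBl, amulBr, amul0l, amul0r).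

Local Notation eig := (eigsp mul).
Local Notation axis := (is_axis mul eta).

Lemma eigsp_lin x l k u v : eig x l u -> eig x l v -> eig x l (k *: u + v).
Proof. by rewrite /eigsp => hu hv; amul_expand; rewrite hu hv; lmod_ring. Qed.
Lemma eigsp0 x l : eig x l 0. Proof. by rewrite /eigsp amul0l scaler0. Qed.
Lemma eigspD x l u v : eig x l u -> eig x l v -> eig x l (u + v).
Proof. by move=> hu hv; have := eigsp_lin 1 hu hv; rewrite scale1r. Qed.
Lemma eigspZ x l k u : eig x l u -> eig x l (k *: u).
Proof. by move=> hu; have := eigsp_lin k hu (eigsp0 x l); rewrite addr0. Qed.
Lemma eigspB x l u v : eig x l u -> eig x l v -> eig x l (u - v).
Proof. by move=> hu hv; rewrite -scaleN1r addrC; apply: eigsp_lin. Qed.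

Lemma graph_path_start S x z : graph_path mul S x z -> S x.
Proof. by case. Qed.

Lemma graph_path_first_step S x z : graph_path mul S x z -> x <> z ->
  exists2 y, S y & adj mul x y.
Proof. by case=> [//|x' y z' _ xy p] _; exists y => //; apply: graph_path_start p. Qed.

Lemma generates_lspan S : generates mul S ->
  (forall x y, lspan S x -> lspan S y -> lspan S (mul x y)) -> forall x, lspan S x.
Proof.
move=> S_gen lspanM; apply: S_gen; last exact: lspan_mem.
by split; [exact: lspan0 | split; [exact: lspan_lin | exact: lspanM]].
Qed.

Section OneAxis.
Variable x : A.
Hypothesis x_axis : axis x.

Lemma axis_idem : mul x x = x. Proof. by case: x_axis. Qed.

Lemma axis_eig1 : eig x 1 x. Proof. by rewrite /eigsp scale1r axis_idem. Qed.

Lemma axis_decomp y : exists k y0 yn, eig x 0 y0 /\ eig x eta yn /\ y = k *: x + y0 + yn.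
Proof.
case: x_axis => _ [hdec [_ [h1 _]]].
have [y1 [y0 [yn [e1 [e0 [en ->]]]]]] := hdec y.
by have [k ->] := proj1 (h1 y1) e1; exists k, y0, yn.
Qed.

Lemma axis_decomp_uniq k u0 un l v0 vn :
  eig x 0 u0 -> eig x eta un -> eig x 0 v0 -> eig x eta vn ->
  k *: x + u0 + un = l *: x + v0 + vn -> [/\ k *: x = l *: x, u0 = v0 & un = vn].
Proof.
move=> hu0 hun hv0 hvn e; case: x_axis => _ [_ [hdir _]].
have [] := hdir ((k - l) *: x) (u0 - v0) (un - vn).
- by apply: eigspZ; apply: axis_eig1.
- exact: eigspB.
- exact: eigspB.
- have -> : (k - l) *: x + (u0 - v0) + (un - vn) = (k *: x + u0 + un) - (l *: x + v0 + vn).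
    by lmod_ring.
  by rewrite e subrr.
by rewrite scalerBl => /subr0_eq -> [/subr0_eq -> /subr0_eq ->].
Qed.

Lemma axis_coords_uniq k u0 un l v0 vn : x != 0 ->
  eig x 0 u0 -> eig x eta un -> eig x 0 v0 -> eig x eta vn ->
  k *: x + u0 + un = l *: x + v0 + vn -> [/\ k = l, u0 = v0 & un = vn].
Proof.
move=> x0 hu0 hun hv0 hvn /(axis_decomp_uniq hu0 hun hv0 hvn) [e1 e2 e3].
by split => //; apply: scaler_injl x0 e1.
Qed.

Lemma axis_mulE k y0 yn : eig x 0 y0 -> eig x eta yn ->
  mul x (k *: x + y0 + yn) = k *: x + eta *: yn.
Proof.
by move=> h0 hn; amul_expand; rewrite axis_idem (amulC x y0) h0 (amulC x yn) hn; lmod_ring.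
Qed.

Lemma Aplus_axis k u0 : eig x 0 u0 -> Aplus mul x (k *: x + u0).
Proof. by move=> h0; exists (k *: x), u0; split => //; apply: eigspZ; apply: axis_eig1. Qed.

Lemma Aplus_decomp u : Aplus mul x u -> exists k u0, eig x 0 u0 /\ u = k *: x + u0.
Proof.
case: x_axis => _ [_ [_ [h1 _]]] [u1 [u0 [e1 [e0 ->]]]].
by have [k ->] := proj1 (h1 u1) e1; exists k, u0.
Qed.

Lemma Aplus_eig_eq0 u : Aplus mul x u -> eig x eta u -> u = 0.
Proof.
case/Aplus_decomp => k [u0 [h0 ->]] hn.
have E : k *: x + u0 + 0 = 0 *: x + 0 + (k *: x + u0) by lmod_ring.
by case: (axis_decomp_uniq h0 (eigsp0 _ _) (eigsp0 _ _) hn E).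
Qed.

Lemma eig0_mul u v : eig x 0 u -> eig x 0 v -> eig x 0 (mul u v).
Proof. by case: x_axis => _ [_ [_ [_ [_ [_ [_ h]]]]]]; apply: h. Qed.

Lemma eig0_mul_eta u v : eig x 0 u -> eig x eta v -> eig x eta (mul u v).
Proof.
case: x_axis => _ [_ [_ [_ [_ [h _]]]]] hu; apply: h.
by have := Aplus_axis 0 hu; rewrite scale0r add0r.
Qed.

Lemma eig_eta_mul u v : eig x eta u -> eig x eta v -> Aplus mul x (mul u v).
Proof. by case: x_axis => _ [_ [_ [_ [_ [_ [h _]]]]]]; apply: h. Qed.

Lemma idem_eig1_eq y : y != 0 -> mul y y = y -> eig x 1 y -> y = x.
Proof.
move=> y0 yy e; case: x_axis => _ [_ [_ [h1 _]]].
have [k ey] := proj1 (h1 y) e.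
have k0 : k != 0 by apply: contraNneq y0 => k0; rewrite ey k0 scale0r.
have x0 : x != 0 by apply: contraNneq y0 => x0; rewrite ey x0 scaler0.
move: yy; rewrite ey amulZl amulZr axis_idem scalerA -[in RHS](mul1r k).
by move=> /(scaler_injl x0) /(mulIf k0) ->; rewrite scale1r.
Qed.

Lemma axis_mul_mul_coord y psi y0 yn : eig x 0 y0 -> eig x eta yn ->
  y = psi *: x + y0 + yn -> mul x (mul x y) - eta *: mul x y = ((1 - eta) * psi) *: x.
Proof.
move=> h0 hn ->; rewrite axis_mulE //; amul_expand.
by rewrite axis_idem (amulC x yn) hn; lmod_ring.
Qed.

Lemma seress u y : Aplus mul x u -> mul x (mul u y) = mul u (mul x y).
Proof.
case/Aplus_decomp => k [u0 [h0 ->]].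
have [l [y0 [yn [hy0 [hyn ->]]]]] := axis_decomp y.
have u0x : mul u0 x = 0 by rewrite h0 scale0r.
have -> : mul (k *: x + u0) (l *: x + y0 + yn) =
          (k * l) *: x + mul u0 y0 + ((k * eta) *: yn + mul u0 yn).
  by amul_expand; rewrite axis_idem (amulC x y0) hy0 (amulC x yn) hyn u0x; lmod_ring.
have u0yP : eig x eta ((k * eta) *: yn + mul u0 yn).
  by apply: eigspD; [apply: eigspZ | apply: eig0_mul_eta].
have u0y0P : eig x 0 (mul u0 y0) := eig0_mul h0 hy0.
rewrite !axis_mulE //; amul_expand.
by rewrite axis_idem (amulC x yn) hyn u0x; lmod_ring.
Qed.

Lemma axis_sq_Aplus_coords k u0 l : x != 0 -> eig x 0 u0 ->
  mul (k *: x + u0) (k *: x + u0) = l *: (k *: x + u0) -> k * k = l * k /\ mul u0 u0 = l *: u0.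
Proof.
move=> nx u0P E.
have E' : (k * k) *: x + mul u0 u0 + 0 = (l * k) *: x + l *: u0 + 0.
  have -> : (k * k) *: x + mul u0 u0 + 0 = mul (k *: x + u0) (k *: x + u0).
    by amul_expand; rewrite axis_idem (amulC x u0) u0P; lmod_ring.
  by rewrite E; lmod_ring.
by have [-> -> _] :=
  axis_coords_uniq nx (eig0_mul u0P u0P) (eigsp0 _ _) (eigspZ _ u0P) (eigsp0 _ _) E'.
Qed.

End OneAxis.

(* The x-coordinate k of y satisfies k^2 = k, and k = 1 would put x in A_1(y) = F y. *)
Lemma Aplus_axis_mul_eq0 x y : axis x -> axis y -> x != 0 -> y <> x -> Aplus mul x y ->
  mul x y = 0.
Proof.
move=> hx hy x0 yx /(Aplus_decomp hx) [k [y0 [h0 ey]]].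
have Em : mul x y = k *: x.
  by rewrite ey; amul_expand; rewrite (axis_idem hx) (amulC x y0) h0 scale0r addr0.
have [k0|k0] := eqVneq k 0; first by rewrite Em k0 scale0r.
have E : k *: x + y0 + 0 = (k * k) *: x + mul y0 y0 + 0.
  rewrite !addr0 -ey -{1}(axis_idem hy) {1 2}ey; amul_expand.
  by rewrite (axis_idem hx) (amulC x y0) h0; lmod_ring.
have [kk _ _] := axis_coords_uniq hx x0 h0 (eigsp0 _ _) (eig0_mul hx h0 h0) (eigsp0 _ _) E.
have k1 : k = 1 by move/(congr1 (fun t => t / k)): kk; rewrite mulfK // divff.
by exfalso; apply/yx/esym/(idem_eig1_eq hy x0 (axis_idem hx)); rewrite /eigsp Em k1 scale1r.
Qed.


(** * Pairs of axes *)

Section JordanTypeAxes.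
Hypotheses (two_neq0 : (2%:R : F) != 0) (eta_neq0 : eta != 0) (eta_neq1 : eta != 1).

Local Notation half := (2%:R^-1 : F).

Lemma scale2r_eq0 (w : A) : 2%:R *: w = 0 -> w = 0.
Proof. by move/eqP; rewrite scaler_eq0 (negbTE two_neq0) => /eqP. Qed.

Section AxisPair.
Variables (x y y0 yn : A) (phi : F).
Hypotheses (x_axis : axis x) (y_axis : axis y) (x_neq0 : x != 0).
Hypotheses (y0P : eig x 0 y0) (ynP : eig x eta yn) (yE : y = phi *: x + y0 + yn).

(* Read off from y^2 = y in the decomposition of A with respect to x. *)
Lemma axis_pair_sq :
  mul y0 yn = (half - phi * eta) *: yn /\
  mul yn yn = (phi - phi ^+ 2) *: x + (y0 - mul y0 y0).
Proof.
have [mu [u0 [u0P ynynE]]] := Aplus_decomp x_axis (eig_eta_mul x_axis ynP ynP).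
have E : phi *: x + y0 + yn = (phi ^+ 2 + mu) *: x + (mul y0 y0 + u0) +
                              ((2%:R * phi * eta) *: yn + 2%:R *: mul y0 yn).
  rewrite -yE -{1}(axis_idem y_axis) {1 2}yE; amul_expand.
  by rewrite (axis_idem x_axis) (amulC x y0) y0P (amulC x yn) ynP (amulC yn y0) ynynE; lmod_ring.
have [||phiE y0E ynE] := axis_coords_uniq x_axis x_neq0 y0P ynP _ _ E.
- exact: eigspD (eig0_mul x_axis y0P y0P) u0P.
- by apply: eigspD; apply: eigspZ => //; apply: eig0_mul_eta.
split.
  have E2 : 2%:R *: mul y0 yn = yn - (2%:R * phi * eta) *: yn.
    by rewrite {2}ynE addrAC subrr add0r.
  rewrite -[mul y0 yn]scale1r -(mulVf two_neq0) -scalerA E2 scalerBr scalerA -scalerBl.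
  by congr (_ *: _); field.
rewrite ynynE; congr (_ *: _ + _); first by rewrite {1}phiE; ring.
by rewrite {1}y0E addrAC subrr add0r.
Qed.

Variables (x0 xn : A) (psi : F).
Hypotheses (x0P : eig y 0 x0) (xnP : eig y eta xn) (xE : x = psi *: y + x0 + xn).

(* Coordinates, with respect to x, of the identity y(yx) - eta yx = (1 - eta) psi y. *)
Lemma axis_pair_identities :
  [/\ phi ^+ 2 = phi * psi,
      (eta * (phi + half - eta)) *: yn = ((1 - eta) * psi) *: yn &
      eta *: (y0 - mul y0 y0) = ((1 - eta) * psi) *: y0].
Proof.
have [y0ynE ynynE] := axis_pair_sq.
have yxE : mul y x = phi *: x + eta *: yn by rewrite amulC {1}yE axis_mulE.
have yynE : mul y yn = (phi * eta) *: yn + mul y0 yn + mul yn yn.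
  by rewrite amulC {1}yE; amul_expand; rewrite ynP (amulC yn y0); lmod_ring.
have := axis_mul_mul_coord y_axis x0P xnP xE.
rewrite yxE; amul_expand; rewrite yxE yynE y0ynE ynynE.
set c1 := phi * phi + eta * (phi - phi ^+ 2) - eta * phi.
set c2 := phi * eta + eta * (phi * eta) + eta * (half - phi * eta) - eta * eta.
move=> E; have {}E : c1 *: x + eta *: (y0 - mul y0 y0) + c2 *: yn =
    (((1 - eta) * psi) * phi) *: x + ((1 - eta) * psi) *: y0 + ((1 - eta) * psi) *: yn.
  have -> : (((1 - eta) * psi) * phi) *: x + ((1 - eta) * psi) *: y0 + ((1 - eta) * psi) *: yn =
            ((1 - eta) * psi) *: (phi *: x + y0 + yn) by lmod_ring.
  by rewrite -yE -E /c1 /c2; amul_expand; lmod_ring.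
have [||||c1E y0E c2E] := axis_coords_uniq x_axis x_neq0 _ _ _ _ E.
- by apply: eigspZ; apply: eigspB => //; apply: eig0_mul.
- exact: eigspZ.
- exact: eigspZ.
- exact: eigspZ.
have eta1 : 1 - eta != 0 by rewrite subr_eq0 eq_sym.
split => //; last by rewrite -c2E /c2; congr (_ *: _); ring.
apply: (mulfI eta1); have -> : (1 - eta) * phi ^+ 2 = c1 by rewrite /c1; ring.
by rewrite c1E; ring.
Qed.

End AxisPair.

Lemma axis_pair_coords_eq x y y0 yn x0 xn phi psi :
  axis x -> axis y -> x != 0 -> y != 0 ->
  eig x 0 y0 -> eig x eta yn -> y = phi *: x + y0 + yn ->
  eig y 0 x0 -> eig y eta xn -> x = psi *: y + x0 + xn -> phi = psi.
Proof.
move=> hx hy x_neq0 y_neq0 y0P ynP yE x0P xnP xE.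
have [phiE _ _] := axis_pair_identities hx hy x_neq0 y0P ynP yE x0P xnP xE.
have [psiE _ _] := axis_pair_identities hy hx y_neq0 x0P xnP xE y0P ynP yE.
suff /eqP : (phi - psi) ^+ 2 = 0 by rewrite expf_eq0 /= subr_eq0 => /eqP.
by rewrite sqrrB phiE psiE [psi * phi]mulrC; ring.
Qed.

Lemma axis_pair_eta_coord x y y0 yn phi : axis x -> axis y -> x != 0 -> y != 0 ->
  eig x 0 y0 -> eig x eta yn -> y = phi *: x + y0 + yn -> yn != 0 -> eta != half ->
  phi = eta * half.
Proof.
move=> hx hy nx ny y0P ynP yE yn0 eta_neq_half.
have [psi [x0 [xn [x0P [xnP xE]]]]] := axis_decomp hy x.
have phi_psi := axis_pair_coords_eq hx hy nx ny y0P ynP yE x0P xnP xE.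
have [_ + _] := axis_pair_identities hx hy nx y0P ynP yE x0P xnP xE.
rewrite -phi_psi => /(scaler_injl yn0) E.
have eta2 : 1 - 2%:R * eta != 0.
  apply: contra eta_neq_half; rewrite subr_eq0 => /eqP e.
  by apply/eqP/(mulfI two_neq0); rewrite -e divff.
apply: (mulfI eta2); have -> : (1 - 2%:R * eta) * phi = (1 - eta) * phi - eta * phi by ring.
by rewrite -E; field.
Qed.

Lemma axis_pair_zero_sq x y y0 yn phi : eta = half -> axis x -> axis y -> x != 0 -> y != 0 ->
  eig x 0 y0 -> eig x eta yn -> y = phi *: x + y0 + yn -> mul y0 y0 = (1 - phi) *: y0.
Proof.
move=> eta_half hx hy nx ny y0P ynP yE.
have [psi [x0 [xn [x0P [xnP xE]]]]] := axis_decomp hy x.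
have phi_psi := axis_pair_coords_eq hx hy nx ny y0P ynP yE x0P xnP xE.
have [_ _] := axis_pair_identities hx hy nx y0P ynP yE x0P xnP xE.
rewrite -phi_psi eta_half => /(congr1 ( *:%R 2%:R)); rewrite !scalerA mulrA divff // scale1r.
have -> : 2%:R * (1 - half) * phi = phi by field.
by move=> E; rewrite scalerBl scale1r -E; lmod_ring.
Qed.

(** * Axes with the same Miyamoto involution *)

Section SameInvolution.
Variable f : A -> A.

Lemma tau_decompE x k u0 un : axis x -> is_tau mul eta x f ->
  eig x 0 u0 -> eig x eta un -> f (k *: x + u0 + un) = k *: x + u0 - un.
Proof.
move=> hx [f_lin [fP fN]] h0 hn.
have fD p q : f (p + q) = f p + f q by have := f_lin 1 p q; rewrite !scale1r.
by rewrite fD fP ?fN //; apply: Aplus_axis.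
Qed.

Lemma tau_eig_eta_transfer x1 x2 v : axis x1 -> axis x2 ->
  is_tau mul eta x1 f -> is_tau mul eta x2 f -> eig x1 eta v -> eig x2 eta v.
Proof.
move=> hx1 hx2 [_ [_ fN]] ht2 hv.
have [k [v0 [vn [h0 [hn ev]]]]] := axis_decomp hx2 v.
have E := tau_decompE k hx2 ht2 h0 hn; rewrite -ev fN // {1}ev in E.
suff /scale2r_eq0 e0 : 2%:R *: (k *: x2 + v0) = 0 by rewrite ev e0 add0r.
have -> : 2%:R *: (k *: x2 + v0) = (k *: x2 + v0 - vn) - (- (k *: x2 + v0 + vn)).
  by lmod_ring.
by rewrite E subrr.
Qed.

Lemma tau_Aplus_transfer x1 x2 v : axis x1 -> axis x2 ->
  is_tau mul eta x1 f -> is_tau mul eta x2 f -> Aplus mul x1 v -> Aplus mul x2 v.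
Proof.
move=> hx1 hx2 [_ [fP _]] ht2 hv.
have [k [v0 [vn [h0 [hn ev]]]]] := axis_decomp hx2 v.
have E := tau_decompE k hx2 ht2 h0 hn; rewrite -ev fP // {1}ev in E.
suff /scale2r_eq0 vn0 : 2%:R *: vn = 0 by rewrite ev vn0 addr0; apply: Aplus_axis.
have -> : 2%:R *: vn = (k *: x2 + v0 + vn) - (k *: x2 + v0 - vn) by lmod_ring.
by rewrite E subrr.
Qed.

Hypothesis f_nontrivial : exists v, f v <> v.

Lemma tau_axis_neq0 x : axis x -> is_tau mul eta x f -> x != 0.
Proof.
move=> hx ht; apply/eqP => x0; have [v] := f_nontrivial; apply.
have [k [v0 [vn [h0 [hn ->]]]]] := axis_decomp hx v.
have vn0 : vn = 0.
  by apply/eqP; move/eqP: hn; rewrite /eigsp x0 amul0r eq_sym scaler_eq0 (negbTE eta_neq0).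
by rewrite tau_decompE // vn0 subr0 addr0.
Qed.

Lemma tau_axes_orthogonal x1 x2 : axis x1 -> axis x2 ->
  is_tau mul eta x1 f -> is_tau mul eta x2 f -> x1 <> x2 -> mul x1 x2 = 0.
Proof.
move=> hx1 hx2 ht1 ht2 x12; apply: Aplus_axis_mul_eq0 => //; first exact: tau_axis_neq0.
  by move=> e; apply: x12.
apply: (tau_Aplus_transfer hx2 hx1 ht2 ht1).
by have := Aplus_axis hx2 1 (eigsp0 x2 0); rewrite addr0 scale1r.
Qed.

End SameInvolution.

(** * Two such axes in a connected generating set *)

Section SharedInvolution.
Variables (S : A -> Prop) (a b : A) (f : A -> A).
Hypotheses (S_axes : forall x, S x -> axis x) (S_gen : generates mul S)
  (S_conn : graph_connected mul S) (Sa : S a) (Sb : S b) (a_neq_b : a <> b)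
  (tau_a : is_tau mul eta a f) (tau_b : is_tau mul eta b f)
  (f_nontrivial : exists v, f v <> v).

Let a_axis : axis a := S_axes Sa.
Let b_axis : axis b := S_axes Sb.
Let a_neq0 : a != 0 := tau_axis_neq0 f_nontrivial a_axis tau_a.
Let b_neq0 : b != 0 := tau_axis_neq0 f_nontrivial b_axis tau_b.
Let mul_ab : mul a b = 0 := tau_axes_orthogonal f_nontrivial a_axis b_axis tau_a tau_b a_neq_b.
Let mul_ba : mul b a = 0. Proof. by rewrite amulC. Qed.
Let b_eig0_a : eig a 0 b. Proof. by rewrite /eigsp mul_ba scale0r. Qed.
Let a_eig0_b : eig b 0 a. Proof. by rewrite /eigsp mul_ab scale0r. Qed.
Let eig_eta_ab v : eig a eta v -> eig b eta v.
Proof. exact: tau_eig_eta_transfer a_axis b_axis tau_a tau_b. Qed.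
Let mul_a_eta n : eig a eta n -> mul a n = eta *: n.
Proof. by move=> nP; rewrite amulC nP. Qed.
Let mul_b_eta n : eig a eta n -> mul b n = eta *: n.
Proof. by move=> nP; rewrite amulC (eig_eta_ab nP). Qed.

Lemma joint_decomp v : exists al be z n,
  [/\ eig a 0 z, eig b 0 z, eig a eta n & v = al *: a + be *: b + z + n].
Proof.
have [al [v0 [n [v0P [nP ->]]]]] := axis_decomp a_axis v.
have : Aplus mul b v0.
  apply: (tau_Aplus_transfer a_axis b_axis tau_a tau_b).
  by have := Aplus_axis a_axis 0 v0P; rewrite scale0r add0r.
case/(Aplus_decomp b_axis) => be [z [zP v0E]].
exists al, be, z, n; split => //; last by rewrite v0E addrA.
have -> : z = v0 - be *: b by rewrite v0E addrAC subrr add0r.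
by apply: eigspB => //; apply: eigspZ.
Qed.

Lemma joint_decomp_uniq al be z n al' be' z' n' :
  eig a 0 z -> eig b 0 z -> eig a eta n -> eig a 0 z' -> eig b 0 z' -> eig a eta n' ->
  al *: a + be *: b + z + n = al' *: a + be' *: b + z' + n' ->
  [/\ al = al', be = be', z = z' & n = n'].
Proof.
move=> za zb nP za' zb' nP' E.
have {}E : al *: a + (be *: b + z) + n = al' *: a + (be' *: b + z') + n' by rewrite !addrA.
have [||-> E2 ->] := axis_coords_uniq a_axis a_neq0 _ nP _ nP' E.
- by apply: eigspD => //; apply: eigspZ.
- by apply: eigspD => //; apply: eigspZ.
have E2' : be *: b + z + 0 = be' *: b + z' + 0 by rewrite !addr0.
by have [-> -> _] := axis_coords_uniq b_axis b_neq0 zb (eigsp0 _ _) zb' (eigsp0 _ _) E2'.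
Qed.

Lemma joint_decomp_a al be z n : eig a 0 z ->
  eig a 0 (be *: b + z) /\ al *: a + be *: b + z + n = al *: a + (be *: b + z) + n.
Proof. by move=> za; split; [apply: eigspD => //; apply: eigspZ | rewrite addrA]. Qed.

Lemma joint_decomp_b al be z n : eig b 0 z -> eig a eta n ->
  [/\ eig b 0 (al *: a + z), eig b eta n &
      al *: a + be *: b + z + n = be *: b + (al *: a + z) + n].
Proof.
by move=> zb nP; split; [apply: eigspD => //; apply: eigspZ | exact: eig_eta_ab | lmod_ring].
Qed.

(* When the a- and b-coordinates of an axis c both equal eta/2, computing ac and bc
   in the decompositions of A with respect to a, b and c shows that a - b lies in
   A_eta(c) and equals twice its own A_eta(c)-part. *)
Lemma equal_half_eta_coords_absurd c z n : axis c -> c != 0 ->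
  eig a 0 z -> eig b 0 z -> eig a eta n ->
  c = (eta * half) *: a + (eta * half) *: b + z + n -> False.
Proof.
move=> c_axis c0 za zb nP cE.
have [zaP cEa] := joint_decomp_a (eta * half) (eta * half) n za.
have [zbP nbP cEb] := joint_decomp_b (eta * half) (eta * half) zb nP.
rewrite -cE in cEa cEb.
have [pa [a0 [an [a0P [anP aE]]]]] := axis_decomp c_axis a.
have [pb [b0 [bn [b0P [bnP bE]]]]] := axis_decomp c_axis b.
have pa_eq := axis_pair_coords_eq a_axis c_axis a_neq0 c0 zaP nP cEa a0P anP aE.
have pb_eq := axis_pair_coords_eq b_axis c_axis b_neq0 c0 zbP nbP cEb b0P bnP bE.
subst pa pb.
have acE : (eta * half) *: a + eta *: n = (eta * half) *: c + eta *: an.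
  by rewrite -(axis_mulE a_axis _ zaP nP) -cEa amulC {1}aE axis_mulE.
have bcE : (eta * half) *: b + eta *: n = (eta * half) *: c + eta *: bn.
  by rewrite -(axis_mulE b_axis _ zbP nbP) -cEb amulC {1}bE axis_mulE.
have abE : a - b = 2%:R *: (an - bn).
  have : eta *: (half *: (a - b)) = eta *: (an - bn).
    have -> : eta *: (half *: (a - b)) =
              ((eta * half) *: a + eta *: n) - ((eta * half) *: b + eta *: n) by lmod_ring.
    by rewrite acE bcE; lmod_ring.
  by move/(scalerI eta_neq0) <-; rewrite scalerA divff // scale1r.
have E : 0 *: c + (a0 - b0) + (an - bn) = 0 *: c + 0 + 2%:R *: (an - bn).
  by rewrite -abE [in RHS]aE [in RHS]bE; lmod_ring.
have [_ _ E3] := axis_decomp_uniq c_axis (eigspB a0P b0P) (eigspB anP bnP)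
                    (eigsp0 _ _) (eigspZ _ (eigspB anP bnP)) E.
have anbn : an - bn = 0.
  by rewrite [LHS](_ : _ = 2%:R *: (an - bn) - (an - bn)); [rewrite -E3 subrr | lmod_ring].
by apply: a_neq_b; apply/subr0_eq; rewrite abE anbn scaler0.
Qed.

Lemma eta_half : eta = half.
Proof.
have [//|eta_neq_half] := eqVneq eta half; exfalso.
have [c Sc [a_neq_c ac0]] := graph_path_first_step (S_conn Sa Sb) a_neq_b.
have c_axis := S_axes Sc.
have c0 : c != 0 by apply/eqP => c0; apply: ac0; rewrite c0 amul0r.
have [al [be [z [n [za zb nP cE]]]]] := joint_decomp c.
have [zaP cEa] := joint_decomp_a al be n za.
have [zbP nbP cEb] := joint_decomp_b al be zb nP.
rewrite -cE in cEa cEb.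
have n0 : n != 0.
  apply/eqP => n0; apply/ac0/Aplus_axis_mul_eq0 => //; first by move=> e; apply: a_neq_c.
  by rewrite cEa n0 addr0; apply: Aplus_axis.
have alE := axis_pair_eta_coord a_axis c_axis a_neq0 c0 zaP nP cEa n0 eta_neq_half.
have beE := axis_pair_eta_coord b_axis c_axis b_neq0 c0 zbP nbP cEb n0 eta_neq_half.
by apply: (equal_half_eta_coords_absurd c_axis c0 za zb nP); rewrite cE alE beE.
Qed.

(** * The axes of the generating set *)

Definition in_abN s := exists al be n, eig a eta n /\ s = al *: a + be *: b + n.
Definition in_Z s := eig a 0 s /\ eig b 0 s.

Lemma eta_add_eta : eta + eta = 1.
Proof. by rewrite eta_half; field. Qed.

(* a - b lies in A_0(s), hence so does (a - b)^2 = a + b, while s (a + b) = n. *)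
Lemma S_Z_eta_part_eq0 s z n : S s -> eig a 0 z -> eig b 0 z -> eig a eta n ->
  s = z + n -> n = 0.
Proof.
move=> Ss za zb nP sE; have s_axis := S_axes Ss.
have asE : mul a s = eta *: n.
  by rewrite sE amulDr (amulC a z) za (amulC a n) nP scale0r add0r.
have bsE : mul b s = eta *: n.
  by rewrite sE amulDr (amulC b z) zb (amulC b n) (eig_eta_ab nP) scale0r add0r.
have abP : eig s 0 (a - b) by rewrite /eigsp amulBl asE bsE subrr scale0r.
have := eig0_mul s_axis abP abP.
have -> : mul (a - b) (a - b) = a + b.
  by amul_expand; rewrite (axis_idem a_axis) (axis_idem b_axis) mul_ab mul_ba; lmod_ring.
by rewrite /eigsp amulDl asE bsE -scalerDl eta_add_eta scale1r scale0r.
Qed.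

(* z n = 0 by the square relations, so z lies in A_eta(s) together with z^2 = z / 2. *)
Lemma S_half_coords_Z_part_eq0 s z n : S s -> eig a 0 z -> eig b 0 z -> eig a eta n ->
  s = half *: a + half *: b + z + n -> mul z z = half *: z -> z = 0.
Proof.
move=> Ss za zb nP sE zzE; have s_axis := S_axes Ss.
have [zaP sEa] := joint_decomp_a half half n za; rewrite -sE in sEa.
have [+ _] := axis_pair_sq a_axis s_axis a_neq0 zaP nP sEa.
rewrite amulDl amulZl (amulC b n) (eig_eta_ab nP) eta_half scalerA => E.
have znE : mul z n = 0.
  have -> : mul z n = (half * half) *: n + mul z n - (half * half) *: n by lmod_ring.
  by rewrite E -scalerBl [_ - _](_ : _ = 0) ?scale0r //; field.
have zsP : eig s eta z.
  by rewrite /eigsp sE; amul_expand; rewrite za zb znE zzE eta_half; lmod_ring.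
have zz0 : mul z z = 0.
  by apply: (Aplus_eig_eq0 s_axis (eig_eta_mul s_axis zsP zsP)); rewrite zzE; apply: eigspZ.
by apply/eqP; move: zz0; rewrite zzE => /eqP; rewrite scaler_eq0 invr_eq0 (negbTE two_neq0).
Qed.

Lemma S_in_abN_or_Z s : S s -> in_abN s \/ in_Z s.
Proof.
move=> Ss; have s_axis := S_axes Ss.
have [s0|s0] := eqVneq s 0.
  by left; exists 0, 0, 0; split; [exact: eigsp0 | rewrite s0 !scale0r !addr0].
have [al [be [z [n [za zb nP sE]]]]] := joint_decomp s.
have [z0|z0] := eqVneq z 0.
  by left; exists al, be, n; split => //; rewrite sE z0 addr0.
have [zaP sEa] := joint_decomp_a al be n za.
have [zbP nbP sEb] := joint_decomp_b al be zb nP.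
rewrite -sE in sEa sEb.
have [_ zzE] := axis_sq_Aplus_coords b_axis b_neq0 zb
  (axis_pair_zero_sq eta_half a_axis s_axis a_neq0 s0 zaP nP sEa).
have [alE zzE'] := axis_sq_Aplus_coords a_axis a_neq0 za
  (axis_pair_zero_sq eta_half b_axis s_axis b_neq0 s0 zbP nbP sEb).
have be_al : be = al.
  by have /addrI/oppr_inj := scaler_injl z0 (etrans (esym zzE') zzE).
subst be; have [al0|al0] := eqVneq al 0.
  right; have n0 : n = 0.
    by apply: S_Z_eta_part_eq0 Ss za zb nP _; rewrite sE al0 !scale0r !add0r.
  by rewrite sE al0 n0 !scale0r !add0r addr0.
have alh : al = half.
  have e := mulIf al0 alE.
  by apply/(mulfI two_neq0); rewrite divff // mulr_natl mulr2n {2}e addrC subrK.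
have z_eq0 : z = 0.
  apply: (S_half_coords_Z_part_eq0 Ss za zb nP); first by rewrite sE alh.
  by rewrite zzE alh; congr (_ *: _); field.
by rewrite z_eq0 eqxx in z0.
Qed.

Lemma in_abN_mulE al be n al' be' n' : eig a eta n -> eig a eta n' ->
  mul (al *: a + be *: b + n) (al' *: a + be' *: b + n') =
  (al * al') *: a + (be * be') *: b + (eta * (al + be)) *: n' +
  (eta * (al' + be')) *: n + mul n n'.
Proof.
move=> nP nP'; amul_expand.
rewrite (axis_idem a_axis) (axis_idem b_axis) mul_ab mul_ba !mul_a_eta // !mul_b_eta //.
by rewrite (amulC n a) (amulC n b) mul_a_eta // mul_b_eta //; lmod_ring.
Qed.

Lemma ab_mul_eta n : eig a eta n -> mul (a + b) n = n.
Proof. by move=> nP; rewrite amulDl mul_a_eta // mul_b_eta // -scalerDl eta_add_eta scale1r. Qed.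

Lemma ab_mul_joint al be z n : eig a 0 z -> eig b 0 z -> eig a eta n ->
  mul (a + b) (al *: a + be *: b + z + n) = al *: a + be *: b + n.
Proof.
move=> za zb nP; rewrite amulDl !amulDr !amulZr (axis_idem a_axis) (axis_idem b_axis).
rewrite mul_ab mul_ba (amulC a z) (amulC b z) za zb !mul_a_eta // !mul_b_eta //.
by rewrite -[n in RHS]scale1r -eta_add_eta; lmod_ring.
Qed.

Lemma ab_mul_in_abN s : in_abN s -> mul (a + b) s = s.
Proof.
case=> al [be [n [nP ->]]].
by have := ab_mul_joint al be (eigsp0 a 0) (eigsp0 b 0) nP; rewrite addr0.
Qed.

Lemma ab_Aplus s : S s -> in_abN s -> Aplus mul s (a + b).
Proof.
move=> Ss s_abN; have -> : a + b = 1 *: s + (a + b - s) by lmod_ring.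
apply: (Aplus_axis (S_axes Ss)).
by rewrite /eigsp amulBl (ab_mul_in_abN s_abN) (axis_idem (S_axes Ss)) subrr scale0r.
Qed.

(* Seress's lemma gives s((a + b)t) = (a + b)(st), where a + b kills t and fixes st = nt. *)
Lemma in_abN_mul_Z s t : S s -> in_abN s -> in_Z t -> mul s t = 0.
Proof.
move=> Ss s_abN [ta tb].
have := seress (S_axes Ss) t (ab_Aplus Ss s_abN).
have -> : mul (a + b) t = 0 by rewrite amulDl (amulC a) (amulC b) ta tb !scale0r addr0.
have [al [be [n [nP sE]]]] := s_abN.
have stE : mul s t = mul n t.
  by rewrite sE; amul_expand; rewrite (amulC a t) (amulC b t) ta tb !scale0r !scaler0 !add0r.
have ntP : eig a eta (mul n t) by rewrite amulC; apply: eig0_mul_eta.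
by rewrite amul0r stE (ab_mul_eta ntP).
Qed.

Lemma S_in_abN s : S s -> in_abN s.
Proof.
move=> Ss; have : in_abN a by exists 1, 0, 0; split; [exact: eigsp0 | lmod_ring].
elim: (S_conn Sa Ss) => // x y z Sx [_ xy0] p IH x_abN; apply: IH.
have [//|y_Z] := S_in_abN_or_Z (graph_path_start p).
by exfalso; apply/xy0/(in_abN_mul_Z Sx x_abN y_Z).
Qed.

Lemma Aplus_a_decomp u : Aplus mul a u ->
  exists p q z, [/\ eig a 0 z, eig b 0 z & u = p *: a + q *: b + z].
Proof.
move=> uP; have [p [q [z [m [za zb mP uE]]]]] := joint_decomp u.
have [k [u0 [u0P uE']]] := Aplus_decomp a_axis uP.
have E : p *: a + (q *: b + z) + m = k *: a + u0 + 0 by rewrite addr0 -uE' uE !addrA.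
have [|_ _ m0] := axis_coords_uniq a_axis a_neq0 _ mP u0P (eigsp0 _ _) E.
  by apply: eigspD => //; apply: eigspZ.
by exists p, q, z; rewrite uE m0 addr0.
Qed.

(* Seress's lemma for s and a + b gives ss' = (a + b)(ss'), so (a + b) fixes nn' in
   A_+(a) = F a + F b + Z, which kills its Z-part. *)
Lemma S_eta_parts_mul_ab_span s s' al be n al' be' n' : S s -> S s' ->
  eig a eta n -> s = al *: a + be *: b + n -> eig a eta n' -> s' = al' *: a + be' *: b + n' ->
  exists p q, mul n n' = p *: a + q *: b.
Proof.
move=> Ss Ss' nP sE nP' s'E.
have fixed : mul (a + b) (mul n n') = mul n n'.
  have := seress (S_axes Ss) s' (ab_Aplus Ss (S_in_abN Ss)).
  rewrite (ab_mul_in_abN (S_in_abN Ss')) sE s'E in_abN_mulE // !amulDr !amulZr.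
  rewrite amulDl (axis_idem a_axis) mul_ba amulDl mul_ab (axis_idem b_axis).
  rewrite (ab_mul_eta nP) (ab_mul_eta nP').
  by rewrite addr0 add0r => /addrI.
have [p [q [z [za zb nnE]]]] := Aplus_a_decomp (eig_eta_mul a_axis nP nP').
have zfix := ab_mul_joint p q za zb (eigsp0 a eta); rewrite !addr0 in zfix.
rewrite nnE zfix in fixed.
have z0 : z = 0 by apply: (addrI (p *: a + q *: b)); rewrite addr0 {2}fixed.
by exists p, q; rewrite nnE z0 addr0.
Qed.

Lemma S_coords_sum s al be n : S s -> eig a eta n -> s = al *: a + be *: b + n -> n != 0 ->
  al + be = 1.
Proof.
move=> Ss nP sE n0; have bP : eig a 0 (be *: b) by apply: eigspZ.
have [+ _] := axis_pair_sq a_axis (S_axes Ss) a_neq0 bP nP sE.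
rewrite amulZl mul_b_eta // scalerA eta_half => /(scaler_injl n0) E.
by apply: (mulIf (invr_neq0 two_neq0)); rewrite mulrDl E; ring.
Qed.

(* Coordinates of s(sn') - eta sn' = (1 - eta) psi s, with psi the s-coordinate of n'. *)
Lemma S_eta_part_mul_coords_eq s al be n n' p q :
  S s -> eig a eta n -> s = al *: a + be *: b + n ->
  eig a eta n' -> mul n n' = p *: a + q *: b -> p = q.
Proof.
move=> Ss nP sE nP' nnE; have s_axis := S_axes Ss.
have [n0|n0] := eqVneq n 0.
  have E : 0 *: a + 0 *: b + 0 + 0 = p *: a + q *: b + 0 + 0.
    by rewrite -nnE n0 amul0l; lmod_ring.
  by have [<- <- _ _] := joint_decomp_uniq (eigsp0 _ _) (eigsp0 _ _) (eigsp0 _ _)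
                           (eigsp0 _ _) (eigsp0 _ _) (eigsp0 _ _) E.
have beE : be = 1 - al by rewrite -(S_coords_sum Ss nP sE n0) addrC addKr.
subst be.
have [psi [x0 [xn [x0P [xnP n'E]]]]] := axis_decomp s_axis n'.
have sn'E : mul s n' = half *: n' + (p *: a + q *: b).
  by rewrite sE; amul_expand; rewrite !mul_a_eta // !mul_b_eta // nnE eta_half; lmod_ring.
have saE : mul s a = al *: a + half *: n.
  by rewrite sE; amul_expand; rewrite (axis_idem a_axis) mul_ba nP eta_half; lmod_ring.
have sbE : mul s b = (1 - al) *: b + half *: n.
  rewrite sE; amul_expand; rewrite (axis_idem b_axis) mul_ab (amulC n b) mul_b_eta //.
  by rewrite eta_half; lmod_ring.
have := axis_mul_mul_coord s_axis x0P xnP n'E.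
rewrite sn'E; amul_expand; rewrite sn'E saE sbE eta_half.
set D := (1 - half) * psi => E.
have {}E : (p * al) *: a + (q * (1 - al)) *: b + 0 + (half * (p + q)) *: n =
           (D * al) *: a + (D * (1 - al)) *: b + 0 + D *: n.
  have -> : (D * al) *: a + (D * (1 - al)) *: b + 0 + D *: n = D *: s.
    by rewrite sE; lmod_ring.
  by rewrite -E; lmod_ring.
have [Ea Eb _ En] := joint_decomp_uniq (eigsp0 a 0) (eigsp0 b 0) (eigspZ _ nP)
                       (eigsp0 _ _) (eigsp0 _ _) (eigspZ D nP) E.
rewrite -(scaler_injl n0 En) in Ea Eb.
apply/eqP; rewrite -subr_eq0; apply/eqP.
rewrite (_ : p - q = 2%:R * ((p * al - half * (p + q) * al) -
                             (q * (1 - al) - half * (p + q) * (1 - al)))); last by field.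
by rewrite Ea Eb !subrr mulr0.
Qed.

Lemma S_eta_parts_mul_unit s s' al be n al' be' n' : S s -> S s' ->
  eig a eta n -> s = al *: a + be *: b + n -> eig a eta n' -> s' = al' *: a + be' *: b + n' ->
  exists t, mul n n' = t *: (a + b).
Proof.
move=> Ss Ss' nP sE nP' s'E.
have [p [q nnE]] := S_eta_parts_mul_ab_span Ss Ss' nP sE nP' s'E.
by exists p; rewrite nnE (S_eta_part_mul_coords_eq Ss nP sE nP' nnE) scalerDr.
Qed.

Lemma lspan_S_eta_part s al be n : S s -> s = al *: a + be *: b + n -> lspan S n.
Proof.
move=> Ss sE; have -> : n = s + ((- al) *: a + (- be) *: b) by rewrite sE; lmod_ring.
by apply: lspanD; [exact: lspan_mem | apply: lspanD; apply: lspanZ; apply: lspan_mem].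
Qed.

Lemma lspan_mul x y : lspan S x -> lspan S y -> lspan S (mul x y).
Proof.
have lspan_S_mul s s' : S s -> S s' -> lspan S (mul s s').
  move=> Ss Ss'; have [al [be [n [nP sE]]]] := S_in_abN Ss.
  have [al' [be' [n' [nP' s'E]]]] := S_in_abN Ss'.
  have [t nnE] := S_eta_parts_mul_unit Ss Ss' nP sE nP' s'E.
  have Sn := lspan_S_eta_part Ss sE; have Sn' := lspan_S_eta_part Ss' s'E.
  rewrite sE s'E in_abN_mulE // nnE.
  by do ![exact: Sn | exact: Sn' | apply: lspanD | apply: lspanZ | apply: lspan_mem].
elim=> [s Ss| |k x1 x2 _ IH1 _ IH2].
- elim=> [s' Ss'| |k y1 y2 _ IH1 _ IH2]; first exact: lspan_S_mul.
  + by rewrite amul0r; exact: lspan0.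
  + by rewrite amulDr amulZr; apply: lspan_lin.
- by move=> _; rewrite amul0l; exact: lspan0.
- by move=> Sy; rewrite amulDl amulZl; apply: lspan_lin; [apply: IH1 | apply: IH2].
Qed.

Let lspan_all x : lspan S x := generates_lspan S_gen lspan_mul x.

Lemma ab_mul_id x : mul (a + b) x = x.
Proof.
elim: (lspan_all x) => [s Ss| |k x1 x2 _ IH1 _ IH2].
- exact: ab_mul_in_abN (S_in_abN Ss).
- exact: amul0r.
- by rewrite amulDr amulZr IH1 IH2.
Qed.

Lemma abN_decomp x :
  exists p : F * F * A, eig a eta p.2 /\ x = p.1.1 *: a + p.1.2 *: b + p.2.
Proof.
have [al [be [z [n [za zb nP xE]]]]] := joint_decomp x.
exists (al, be, n); split => //=.
by have := ab_mul_id x; rewrite {1}xE ab_mul_joint // => <-.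
Qed.

Lemma abN_decomp_uniq al be n al' be' n' : eig a eta n -> eig a eta n' ->
  al *: a + be *: b + n = al' *: a + be' *: b + n' -> [/\ al = al', be = be' & n = n'].
Proof.
move=> nP nP' E.
have E' : al *: a + be *: b + 0 + n = al' *: a + be' *: b + 0 + n' by rewrite !addr0.
by have [-> -> _ ->] :=
  joint_decomp_uniq (eigsp0 _ _) (eigsp0 _ _) nP (eigsp0 _ _) (eigsp0 _ _) nP' E'.
Qed.

(** * Coordinates and the Clifford structure *)

Definition abN_coords x : F * F * A :=
  sval (constructive_indefinite_description _ (abN_decomp x)).
Definition coord_a x := (abN_coords x).1.1.
Definition coord_b x := (abN_coords x).1.2.
Definition eta_part x := (abN_coords x).2.

Lemma eta_part_eig x : eig a eta (eta_part x).
Proof. exact: (proj1 (svalP (constructive_indefinite_description _ (abN_decomp x)))). Qed.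

Lemma coordsE x : x = coord_a x *: a + coord_b x *: b + eta_part x.
Proof. exact: (proj2 (svalP (constructive_indefinite_description _ (abN_decomp x)))). Qed.

Lemma coords_uniq x al be n : eig a eta n -> x = al *: a + be *: b + n ->
  [/\ coord_a x = al, coord_b x = be & eta_part x = n].
Proof. by move=> nP xE; apply: abN_decomp_uniq (eta_part_eig x) nP _; rewrite -coordsE. Qed.

Lemma coords_lin k x y :
  [/\ coord_a (k *: x + y) = k * coord_a x + coord_a y,
      coord_b (k *: x + y) = k * coord_b x + coord_b y &
      eta_part (k *: x + y) = k *: eta_part x + eta_part y].
Proof.
apply: coords_uniq; first by apply: eigsp_lin; apply: eta_part_eig.
by rewrite [in LHS](coordsE x) [in LHS](coordsE y); lmod_ring.
Qed.

Lemma eta_part_mul x y : exists t, mul (eta_part x) (eta_part y) = t *: (a + b).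
Proof.
have np0 : eta_part 0 = 0.
  have E0 : (0 : A) = 0 *: a + 0 *: b + 0 by lmod_ring.
  by have [_ _] := coords_uniq (eigsp0 a eta) E0.
elim: (lspan_all x) y => [s Ss| |k x1 x2 _ IH1 _ IH2] y.
- elim: (lspan_all y) => [s' Ss'| |k y1 y2 _ IH1 _ IH2].
  + exact: S_eta_parts_mul_unit Ss Ss' (eta_part_eig s) (coordsE s)
             (eta_part_eig s') (coordsE s').
  + by exists 0; rewrite np0 amul0r scale0r.
  + have [t1 E1] := IH1; have [t2 E2] := IH2; have [_ _ ->] := coords_lin k y1 y2.
    by exists (k * t1 + t2); rewrite amulDr amulZr E1 E2; lmod_ring.
- by exists 0; rewrite np0 amul0l scale0r.
- have [t1 E1] := IH1 y; have [t2 E2] := IH2 y; have [_ _ ->] := coords_lin k x1 x2.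
  by exists (k * t1 + t2); rewrite amulDl amulZl E1 E2; lmod_ring.
Qed.

Definition coord_sum x := coord_a x + coord_b x.

Lemma coord_sum_lin k x y : coord_sum (k *: x + y) = k * coord_sum x + coord_sum y.
Proof. by rewrite /coord_sum; have [-> -> _] := coords_lin k x y; ring. Qed.

Definition coord_sum_form : linear_form A := LinearForm coord_sum_lin.

Lemma coord_sumZ k x : coord_sum (k *: x) = k * coord_sum x.
Proof. exact: lformZ coord_sum_form k x. Qed.

Lemma coords_unit c : coord_a (c *: (a + b)) = c /\ coord_b (c *: (a + b)) = c.
Proof.
have E : c *: (a + b) = c *: a + c *: b + 0 by lmod_ring.
by have [-> -> _] := coords_uniq (eigsp0 a eta) E.
Qed.

Lemma coord_sum_unit : coord_sum (a + b) = 2%:R.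
Proof. by rewrite -[a + b]scale1r /coord_sum; have [-> ->] := coords_unit 1. Qed.

(* The kernel of coord_sum is F (a - b) + N, and (a - b)^2 = a + b while (a - b) N = 0. *)
Lemma coord_sum_ker_mul u w : coord_sum u = 0 -> coord_sum w = 0 ->
  mul u w = coord_a (mul u w) *: (a + b).
Proof.
have kerE v : coord_sum v = 0 -> v = coord_a v *: (a - b) + eta_part v.
  move=> v0; rewrite {1}(coordsE v) (_ : coord_b v = - coord_a v); first by lmod_ring.
  by apply/eqP; rewrite -addr_eq0 addrC; apply/eqP.
move=> u0 w0; have [t Et] := eta_part_mul u w.
have nuP := eta_part_eig u; have nwP := eta_part_eig w.
have -> : mul u w = (coord_a u * coord_a w + t) *: (a + b).
  rewrite [in LHS](kerE u u0) [in LHS](kerE w w0); amul_expand.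
  rewrite (axis_idem a_axis) (axis_idem b_axis) mul_ab mul_ba (amulC _ a) (amulC _ b).
  by rewrite !mul_a_eta // !mul_b_eta // Et; lmod_ring.
by have [-> _] := coords_unit (coord_a u * coord_a w + t).
Qed.

Lemma clifford_mulE p q u w : coord_sum u = 0 -> coord_sum w = 0 ->
  mul (p *: (a + b) + u) (q *: (a + b) + w) =
  (p * q + coord_a (mul u w)) *: (a + b) + (p *: w + q *: u).
Proof.
move=> u0 w0; rewrite amulDl !amulDr !amulZl !amulZr !ab_mul_id (amulC u) ab_mul_id.
by rewrite [in LHS](coord_sum_ker_mul u0 w0); lmod_ring.
Qed.

Definition unit_coord x := half * coord_sum x.

Lemma unit_coord_lin k x y : unit_coord (k *: x + y) = k * unit_coord x + unit_coord y.
Proof. by rewrite /unit_coord coord_sum_lin; ring. Qed.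

Lemma unit_coord_decomp c v : coord_sum v = 0 -> unit_coord (c *: (a + b) + v) = c.
Proof. by move=> v0; rewrite /unit_coord coord_sum_lin v0 coord_sum_unit; field. Qed.

Lemma coord_sum_unit_proj x : coord_sum (x - unit_coord x *: (a + b)) = 0.
Proof.
by rewrite addrC -scaleNr coord_sum_lin coord_sum_unit /unit_coord; field.
Qed.

(* A = F (a + b) (+) ker(coord_sum), the first coordinate being half of coord_sum. *)
Lemma clifford_iso : exists (V : lmodType F) (B : V -> V -> F) (phi : A -> F * V),
  symbilin B /\ iso_J mul B phi.
Proof.
have kerP x : x - unit_coord x *: (a + b) \in kernel_pred coord_sum_form.
  by rewrite unfold_in; apply/eqP; apply: coord_sum_unit_proj.
have sum_ker (u : kernel coord_sum_form) : coord_sum (kernel_val u) = 0.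
  exact: kernel_val_eq0 coord_sum_form u.
pose phi x : F * kernel coord_sum_form := (unit_coord x, Kernel (kerP x)).
pose B (u v : kernel coord_sum_form) := coord_a (mul (kernel_val u) (kernel_val v)).
have mulE x y : mul x y =
    (unit_coord x * unit_coord y + B (phi x).2 (phi y).2) *: (a + b) +
    (unit_coord x *: kernel_val (phi y).2 + unit_coord y *: kernel_val (phi x).2).
  have decE z : z = unit_coord z *: (a + b) + (z - unit_coord z *: (a + b)) by lmod_ring.
  by rewrite {1}(decE x) {1}(decE y) clifford_mulE ?coord_sum_unit_proj.
exists (kernel coord_sum_form), B, phi; split.
  split => [k u v w | u v]; last by rewrite /B amulC.
  rewrite /B kernel_valD kernel_valZ amulDl amulZl.
  by case: (coords_lin k (mul (kernel_val u) (kernel_val w)) (mul (kernel_val v) (kernel_val w))).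
split.
  exists (fun p => p.1 *: (a + b) + kernel_val p.2) => [x | [c v]] /=; first by lmod_ring.
  congr pair; first exact: unit_coord_decomp.
  by apply: kernel_val_inj => /=; rewrite unit_coord_decomp //; lmod_ring.
split => [k x y | x y].
  congr pair; first exact: unit_coord_lin.
  by apply: kernel_val_inj; rewrite kernel_valD kernel_valZ /= unit_coord_lin; lmod_ring.
have tM : unit_coord (mul x y) = unit_coord x * unit_coord y + B (phi x).2 (phi y).2.
  by rewrite mulE unit_coord_decomp // coord_sum_lin coord_sumZ !sum_ker; ring.
rewrite /jmul /=; congr pair => //; apply: kernel_val_inj.
by rewrite kernel_valD !kernel_valZ /= tM [in LHS]mulE; lmod_ring.
Qed.

End SharedInvolution.
End JordanTypeAxes.
End Axial.

Theorem theoremB (F : fieldType) (A : lmodType F) (mul : A -> A -> A) (eta : F)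
  (S : A -> Prop) (a b : A) :
  (2%:R : F) != 0 ->
  eta != 0 -> eta != 1 ->
  comm_algebra mul ->
  (forall x, S x -> is_axis mul eta x) ->
  generates mul S ->
  graph_connected mul S ->
  S a -> S b -> a <> b ->
  (exists f : A -> A, is_tau mul eta a f /\ is_tau mul eta b f /\ exists x, f x <> x) ->
  eta = 2%:R^-1 /\
  (forall x, mul (a + b) x = x /\ mul x (a + b) = x) /\
  exists (V : lmodType F) (B : V -> V -> F) (phi : A -> F * V),
    symbilin B /\ iso_J mul B phi.
Proof.
move=> two_neq0 eta_neq0 eta_neq1 mulC S_axes S_gen S_conn Sa Sb a_neq_b.
case=> f [tau_a [tau_b f_nontrivial]].
have ab_id x : mul (a + b) x = x.
  exact: (ab_mul_id mulC two_neq0 eta_neq0 eta_neq1 S_axes S_gen S_conn Sa Sb a_neq_b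
            tau_a tau_b f_nontrivial).
split; first exact: (eta_half mulC two_neq0 eta_neq0 eta_neq1 S_axes S_conn Sa Sb a_neq_b
                       tau_a tau_b f_nontrivial).
split; first by move=> x; rewrite (amulC mulC x) ab_id.
exact: (clifford_iso mulC two_neq0 eta_neq0 eta_neq1 S_axes S_gen S_conn Sa Sb a_neq_b
          tau_a tau_b f_nontrivial).
Qed.
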